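(* Let $G$ be a directed graph on vertex set $V$ with $|V|=n$, and let $\pi:V\to[1,n]$ be such that (a) if $x,y$ lie in distinct strongly connected components of $G$ and there is an $x\to y$ path in $G$, then $\pi(x)<\pi(y)$, and (b) if $x,y$ are strongly connected then $\pi(x)=\pi(y)$. Let $s\in V$, let $V_s$ be the set of vertices reachable from $s$ in $G$, let $\mathcal{S}_s$ be the set of strongly connected components of $G$ reachable from $s$, and let $\mathcal{S}_s'\subseteq\mathcal{S}_s$ be arbitrary. Suppose $H\subseteq G[V_s]$ with $V(H)=V_s$ satisfies: (1) for each $t\in V_s\setminus\{s\}$ for which some edge $vt\in E(G)$ with $v\in\bigcup\mathcal{S}_s'$ exists, $H$ contains such an edge $vt$ with $\pi(v)$ minimal among all $v\in\bigcup\mathcal{S}_s'$ with $vt\in E(G)$; (2) for all $(X,Y)\in(\mathcal{S}_s\setminus\mathcal{S}_s')\times\mathcal{S}_s$, $H$ contains an edge $xy\in E(G)\cap(X\times Y)$ if such an edge exists; (3) for each $S\in\mathcal{S}_s$, $H[S]$ is strongly connected. Then all vertices of $V_s$ are reachable from $s$ in $H$.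
   Context: Strongly connected components are the equivalence classes of mutual reachability; $G[U]$ denotes the subgraph induced by $U$. *)

From mathcomp Require Import all_boot.
Set Implicit Arguments. Unset Strict Implicit. Unset Printing Implicit Defensive.

(* A directed graph on a finite vertex type V is an edge relation e : rel V.
   Reachability (paths, including the trivial one) is [connect e]. *)

Definition strongly_connected (V : finType) (e : rel V) (x y : V) : bool :=
  connect e x y && connect e y x.

Definition scc (V : finType) (e : rel V) (x : V) : {set V} :=
  [set y | strongly_connected e x y].

Definition reach_set (V : finType) (e : rel V) (s : V) : {set V} :=
  [set v | connect e s v].

Definition reach_sccs (V : finType) (e : rel V) (s : V) : {set {set V}} :=
  [set scc e x | x in reach_set e s].

Definition induced (V : finType) (e : rel V) (U : {set V}) : rel V :=
  [rel a b | [&& e a b, a \in U & b \in U]].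

(* Vertices of V_s are reached in H in increasing order of pi.  If s is not in
   the component S of y, the last edge x t entering S on an s-y path of G has
   pi x < pi t = pi y.  Depending on whether the component of x lies in S'_s,
   condition (1) or (2) yields an edge of H into S whose source has pi below
   pi y, so it is reached by induction, and condition (3) then leads to y
   inside S. *)

From mathcomp Require Import all_boot.

Set Implicit Arguments. Unset Strict Implicit. Unset Printing Implicit Defensive.

Lemma connect_edge_into (V : finType) (e : rel V) (A : {set V}) a b :
  connect e a b -> a \notin A -> b \in A ->
  exists x t, [/\ x \notin A, t \in A, e x t & connect e a x].
Proof.
move/connectP=> [p]; elim: p a => [|c p IH] a /=; first by move=> _ -> /negP.
move=> /andP[eac pc] lastc aA bA; have [cA | cNA] := boolP (c \in A).
  by exists a, c.
have [x [t [xA tA ext cx]]] := IH c pc lastc cNA bA.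
by exists x, t; split=> //; apply: connect_trans (connect1 eac) cx.
Qed.

Lemma connect_induced (V : finType) (e : rel V) (U : {set V}) x y :
  connect (induced e U) x y -> connect e x y.
Proof. by apply: connect_sub => a b /andP[eab _]; apply: connect1. Qed.

Section StronglyConnected.

Variables (V : finType) (e : rel V).

Lemma strongly_connected_sym x y :
  strongly_connected e x y = strongly_connected e y x.
Proof. by rewrite /strongly_connected andbC. Qed.

Lemma strongly_connected_trans x y z :
  strongly_connected e x y -> strongly_connected e y z ->
  strongly_connected e x z.
Proof.
move=> /andP[xy yx] /andP[yz zy].
by apply/andP; split; [apply: connect_trans xy yz | apply: connect_trans zy yx].
Qed.

Lemma in_scc x y : (y \in scc e x) = strongly_connected e x y.
Proof. by rewrite inE. Qed.

Lemma mem_scc x : x \in scc e x.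
Proof. by rewrite in_scc /strongly_connected connect0. Qed.

Lemma mem_reach_sccs s x : x \in reach_set e s -> scc e x \in reach_sccs e s.
Proof. exact: imset_f. Qed.

End StronglyConnected.

Section EdgeIntoComponent.

Variables (V : finType) (e : rel V) (pi : V -> nat).
Hypothesis pi_lt : forall x y,
  ~~ strongly_connected e x y -> connect e x y -> pi x < pi y.
Hypothesis pi_eq : forall x y, strongly_connected e x y -> pi x = pi y.

Lemma pi_lt_scc_entry x t y :
  x \notin scc e y -> e x t -> t \in scc e y -> pi x < pi y.
Proof.
move=> xNY ext; rewrite in_scc => syt; rewrite (pi_eq syt).
apply: pi_lt (connect1 ext); apply: contra xNY => sxt.
by rewrite in_scc (strongly_connected_trans syt) // strongly_connected_sym.
Qed.

Variables (s : V) (S' : {set {set V}}) (h : rel V).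
Hypothesis h_min_in : forall t, t \in reach_set e s -> t != s ->
  (exists2 v, v \in cover S' & e v t) ->
  exists2 v, v \in cover S' &
    h v t /\ (forall u, u \in cover S' -> e u t -> pi v <= pi u).
Hypothesis h_cross : forall X Y,
  X \in reach_sccs e s :\: S' -> Y \in reach_sccs e s ->
  (exists x y, [/\ x \in X, y \in Y & e x y]) ->
  exists x y, [/\ x \in X, y \in Y & h x y].

Lemma h_edge_into_scc y : y \in reach_set e s -> s \notin scc e y ->
  exists u w, [/\ h u w, w \in scc e y & pi u < pi y].
Proof.
move=> yR sNY; have sy : connect e s y by rewrite inE in yR.
have [x [t [xNY tY ext sx]]] := connect_edge_into sy sNY (mem_scc e y).
have pixy : pi x < pi y := pi_lt_scc_entry xNY ext tY.
have xR : x \in reach_set e s by rewrite inE.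
have [xS' | xNS'] := boolP (scc e x \in S').
  have xS'c : x \in cover S' by apply/bigcupP; exists (scc e x); rewrite ?mem_scc.
  have tR : t \in reach_set e s by rewrite inE (connect_trans sx (connect1 ext)).
  have tNs : t != s by apply: contraNneq sNY => <-.
  have [v _ [hvt vmin]] := h_min_in tR tNs (ex_intro2 _ _ x xS'c ext).
  by exists v, t; split=> //; apply: leq_ltn_trans (vmin x xS'c ext) pixy.
have XR : scc e x \in reach_sccs e s :\: S' by rewrite inE xNS' mem_reach_sccs.
have XY_edge : exists a b, [/\ a \in scc e x, b \in scc e y & e a b].
  by exists x, t; rewrite mem_scc.
have [x' [w [xx' wY hx'w]]] := h_cross XR (mem_reach_sccs yR) XY_edge.
by exists x', w; split=> //; rewrite in_scc in xx'; rewrite -(pi_eq xx').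
Qed.

End EdgeIntoComponent.

Theorem lemma14 (V : finType) (e : rel V) (pi : V -> nat)
  (pi_range : forall x, 1 <= pi x <= #|V|)
  (pi_a : forall x y, ~~ strongly_connected e x y -> connect e x y -> pi x < pi y)
  (pi_b : forall x y, strongly_connected e x y -> pi x = pi y)
  (s : V) (S' : {set {set V}}) (HS' : S' \subset reach_sccs e s)
  (h : rel V)
  (h_sub : forall x y, h x y -> induced e (reach_set e s) x y)
  (H1 : forall t, t \in reach_set e s -> t != s ->
          (exists2 v, v \in cover S' & e v t) ->
          exists2 v, v \in cover S' &
            h v t /\ (forall u, u \in cover S' -> e u t -> pi v <= pi u))
  (H2 : forall X Y, X \in reach_sccs e s :\: S' -> Y \in reach_sccs e s ->
          (exists x y, [/\ x \in X, y \in Y & e x y]) ->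
          exists x y, [/\ x \in X, y \in Y & h x y])
  (H3 : forall S, S \in reach_sccs e s ->
          forall x y, x \in S -> y \in S -> connect (induced h S) x y) :
  forall v, v \in reach_set e s -> connect h s v.
Proof.
have within_scc y x : y \in reach_set e s -> x \in scc e y -> connect h x y.
  move=> yR xY; apply: connect_induced (H3 _ (mem_reach_sccs yR) _ _ xY _).
  exact: mem_scc.
suff reach_below k y : pi y < k -> y \in reach_set e s -> connect h s y.
  by move=> v; apply: reach_below (ltnSn (pi v)).
elim: k y => // k IH y yk yR.
have [sY | sNY] := boolP (s \in scc e y); first exact: within_scc.
have [u [w [huw wY piu]]] := h_edge_into_scc pi_a pi_b H1 H2 yR sNY.
have uR : u \in reach_set e s by have /and3P[] := h_sub _ _ huw.
apply: connect_trans (IH u (leq_trans piu yk) uR) _.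
exact: connect_trans (connect1 huw) (within_scc y w yR wY).
Qed.
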